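(* Let $n\ge 3$ with $n\equiv 1$ or $3 \pmod 6$, and let $S_n$ be a Steiner latin square of order $n$. Then $$t(S_n)\ \ge\ \frac{6^{\lceil (n-1)/6\rceil-1}\,\lfloor n/3\rfloor!}{\lceil (n-1)/6\rceil!\,\lceil (n-1)/6\rceil}.$$
   Context: A latin square of order $n$ is an $n\times n$ array with entries from $\{0,1,\dots,n-1\}$ in which each symbol occurs exactly once in each row and each column; it is identified with the set of ordered triples $(r,c,s)$ meaning symbol $s$ is in row $r$, column $c$. A transversal of a latin square is a set of $n$ entries containing exactly one entry from each row and each column and in which no symbol is repeated. $t(A)$ denotes the number of transversals of the latin square $A$. A Steiner triple system (STS) on an $n$-element set $X$ is a set of $3$-element subsets of $X$ such that every $2$-element subset of $X$ lies in exactly one of them. The Steiner latin square of an STS on $X=\{0,\dots,n-1\}$ is the latin square consisting of the triples $(a,a,a)$ for all $a\in X$ together with all six ordered triples $(x,y,z)$ obtained by ordering each triple $\{x,y,z\}$ of the STS; i.e. the entry in row $x$, column $y$ is $x$ if $x=y$, and otherwise is the third element of the unique STS triple containing $x$ and $y$. A Steiner latin square of order $n$ is one arising in this way from some STS of order $n$. *)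

From mathcomp Require Import all_boot all_order all_algebra.
Set Implicit Arguments. Unset Strict Implicit. Unset Printing Implicit Defensive.

Definition triple n := ('I_n * 'I_n * 'I_n)%type.
Definition row_of n (t : triple n) : 'I_n := t.1.1.
Definition col_of n (t : triple n) : 'I_n := t.1.2.
Definition sym_of n (t : triple n) : 'I_n := t.2.

Definition is_transversal n (A : {set triple n}) (T : {set triple n}) : bool :=
  [&& T \subset A, #|T| == n,
      [forall r : 'I_n, #|[set t in T | row_of t == r]| == 1],
      [forall c : 'I_n, #|[set t in T | col_of t == c]| == 1] &
      [forall t1 in T, forall t2 in T, (sym_of t1 == sym_of t2) ==> (t1 == t2)]].

Definition ntrans n (A : {set triple n}) : nat :=
  #|[set T : {set triple n} | is_transversal A T]|.

Definition is_STS n (S : {set {set 'I_n}}) : Prop :=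
  (forall B, B \in S -> #|B| = 3) /\
  (forall x y : 'I_n, x != y -> #|[set B in S | (x \in B) && (y \in B)]| = 1).

(* Steiner latin square of an STS: triples (a,a,a), plus all six orderings
   (x,y,z) of each block {x,y,z} of S. *)
Definition steiner_ls n (S : {set {set 'I_n}}) : {set triple n} :=
  [set t : triple n | ((row_of t == col_of t) && (col_of t == sym_of t))
                      || ([set row_of t; col_of t; sym_of t] \in S)].

Definition ceildiv (a b : nat) : nat := (a + b.-1) %/ b.

From Pilot Require Import Defs.
From mathcomp Require Import all_boot all_order all_algebra.
From mathcomp Require Import zify ring.
Set Implicit Arguments. Unset Strict Implicit. Unset Printing Implicit Defensive.
Import GRing.Theory Num.Theory.

(* Transversals are grown three cells at a time.  If (x, y, z) is a cell of the
   Steiner square whose row, column and symbol are all unused so far, adding it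
   together with its rotations (y, z, x) and (z, x, y) uses each of x, y, z
   exactly once as a row, as a column and as a symbol.  So the partial
   transversal T always uses one set R of indices in all three roles; filling in
   the diagonal cells (a, a, a) for a outside R completes it to a transversal,
   from which T is recovered as the off-diagonal part.
   With s = n - |R| unused indices, an unused row x carries at least 2s - n - 1
   such fresh cells: of the s - 1 unused columns y <> x at most |R| give a used
   symbol, because row and symbol determine the column.  A set obtained after
   p + 1 steps arises from at most 3(p + 1) pairs (set after p steps, fresh
   cell), so with q = n/3 and m = n/6 the number of sets grows by a factor
   6(q - p)(m - p)/(p + 1) at step p.  After m steps this gives at least
   6^m q!/(q - m)! transversals, and q - m = ceil((n - 1)/6). *)

Lemma card_set3_uniq (T : finType) (a b c : T) :
  (#|[set a; b; c]| == 3) = uniq [:: a; b; c].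
Proof.
have -> : #|[set a; b; c]| = #|[:: a; b; c]| by apply: eq_card => x; rewrite !inE orbA.
by apply/eqP/card_uniqP.
Qed.

Lemma set3C (T : finType) (x y z : T) : [set y; z; x] = [set x; y; z].
Proof. by apply/setP => u; rewrite !inE; case: (u == x); case: (u == y); case: (u == z). Qed.

Lemma card_dep_pairs (I J : finType) (A : {set I}) (B : I -> {set J}) :
  #|[set x : I * J | (x.1 \in A) && (x.2 \in B x.1)]| = \sum_(i in A) #|B i|.
Proof.
rewrite -sum1dep_card -(pair_big_dep (mem A) (fun i => mem (B i)) (fun _ _ => 1)) /=.
by apply: eq_bigr => i _; rewrite sum1_card.
Qed.

Lemma card_fibers (T I : finType) (f : T -> I) (X : {set T}) :
  #|X| = \sum_i #|[set x in X | f x == i]|.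
Proof.
rewrite -sum1_card (partition_big f predT) //=.
by apply: eq_bigr => i _; rewrite -sum1_card; apply: eq_bigl => x; rewrite inE.
Qed.

Lemma injective_setU (T : finType) (T' : eqType) (f : T -> T') (A B : {set T}) (C : pred T') :
  {in A &, injective f} -> {in B &, injective f} ->
  {in A, forall x, f x \in C} -> {in B, forall x, f x \notin C} ->
  {in A :|: B &, injective f}.
Proof.
move=> injA injB fA fB x y /setUP [xA|xB] /setUP [yA|yB] e.
- exact: injA.
- by move: (fB _ yB); rewrite -e fA.
- by move: (fB _ xB); rewrite e fA.
- exact: injB.
Qed.

Definition rows_of n (T : {set triple n}) : {set 'I_n} := @row_of n @: T.

Definition rotate n (t : triple n) : triple n := ((col_of t, sym_of t), row_of t).

Definition rotations n (t : triple n) : {set triple n} := [set t; rotate t; rotate (rotate t)].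

Lemma rotationsP n (t u : triple n) :
  u \in rotations t -> [\/ u = t, u = rotate t | u = rotate (rotate t)].
Proof.
by rewrite !inE => /orP [/orP [] |] /eqP ->; [constructor 1 | constructor 2 | constructor 3].
Qed.

Lemma card_rotations n (t : triple n) : #|rotations t| <= 3.
Proof. by rewrite !cardsU !cards1; lia. Qed.

Lemma imset_rotations n (T : finType) (f : triple n -> T) (t : triple n) :
  f @: rotations t = [set f t; f (rotate t); f (rotate (rotate t))].
Proof. by rewrite !imsetU !imset_set1. Qed.

Lemma injective_rotations n (T : eqType) (f : triple n -> T) (t : triple n) :
  f t != f (rotate t) -> f (rotate t) != f (rotate (rotate t)) ->
  f t != f (rotate (rotate t)) -> {in rotations t &, injective f}.
Proof.
move=> h1 h2 h3 u v /rotationsP hu /rotationsP hv.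
by case: hu hv => -> [] -> e //; rewrite ?e ?eqxx // in h1 h2 h3.
Qed.

Record completable n (L T : {set triple n}) : Prop := Completable {
  completable_sub : T \subset L;
  completable_offdiag : {in T, forall t, row_of t != col_of t};
  completable_row_inj : {in T &, injective (@row_of n)};
  completable_col_inj : {in T &, injective (@col_of n)};
  completable_sym_inj : {in T &, injective (@sym_of n)};
  completable_cols : @col_of n @: T = rows_of T;
  completable_syms : @sym_of n @: T = rows_of T }.

Definition diag_cell n (a : 'I_n) : triple n := ((a, a), a).

Definition completion n (T : {set triple n}) : {set triple n} :=
  T :|: [set diag_cell a | a in ~: rows_of T].

Lemma completion_fiber n (f : triple n -> 'I_n) (T : {set triple n}) :
  {in T &, injective f} -> f @: T = rows_of T -> (forall a, f (diag_cell a) = a) ->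
  forall r, #|[set t in completion T | f t == r]| = 1.
Proof.
move=> finj fT fdiag r; apply/eqP/cards1P.
have [rT | rT] := boolP (r \in rows_of T).
- move: rT; rewrite -fT => /imsetP [t0 t0T r_eq]; exists t0.
  apply/setP => t; rewrite !inE; apply/andP/eqP => [[/orP [tT | /imsetP [a aT ->]] /eqP ft] | ->].
  + by apply: finj; rewrite ?ft.
  + by move: aT; rewrite fdiag in ft; rewrite inE ft r_eq -fT imset_f.
  + by rewrite t0T r_eq.
- exists (diag_cell r); apply/setP => t; rewrite !inE.
  apply/andP/eqP => [[/orP [tT | /imsetP [a aT ->]] /eqP ft] | ->].
  + by move: rT; rewrite -fT -ft imset_f.
  + by rewrite fdiag in ft; rewrite ft.
  + by rewrite fdiag eqxx imset_f ?orbT // inE.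
Qed.

(* Qualified because finset has its own [is_transversal] for set partitions. *)
Lemma completion_transversal n (L T : {set triple n}) :
  (forall a, diag_cell a \in L) -> completable L T -> Defs.is_transversal L (completion T).
Proof.
move=> Ldiag cT.
have rows1 := completion_fiber (completable_row_inj cT) erefl (fun a => erefl).
have cols1 := completion_fiber (completable_col_inj cT) (completable_cols cT) (fun a => erefl).
apply/and5P; split.
- rewrite subUset (completable_sub cT); apply/subsetP => _ /imsetP [a _ ->]; exact: Ldiag.
- rewrite (card_fibers (@row_of n)) (eq_bigr (fun _ => 1)) => [|r _]; last exact: rows1.
  by rewrite sum1_card card_ord.
- by apply/forallP => r; apply/eqP/rows1.
- by apply/forallP => c; apply/eqP/cols1.
- apply/forall_inP => t1 t1T; apply/forall_inP => t2 t2T; apply/implyP => /eqP e.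
  apply/eqP; move: e; apply: (injective_setU (C := mem (rows_of T))) t1T t2T.
  + exact: (completable_sym_inj cT).
  + by move=> _ _ /imsetP [a _ ->] /imsetP [b _ ->] /= ->.
  + by move=> u uT; rewrite -(completable_syms cT) imset_f.
  + by move=> u /imsetP [a aT ->]; move: aT; rewrite inE.
Qed.

Lemma completion_offdiag n (T : {set triple n}) :
  {in T, forall t, row_of t != col_of t} ->
  T = [set t in completion T | row_of t != col_of t].
Proof.
move=> Toff; apply/setP => t; rewrite !inE.
have [tT | _] /= := boolP (t \in T); first by rewrite Toff.
by case: (boolP (_ \in _)) => [/imsetP [a _ ->] | _]; rewrite ?eqxx.
Qed.

Section SteinerLatinSquare.

Variables (n : nat) (S : {set {set 'I_n}}).
Hypothesis STS_S : is_STS S.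
Local Notation L := (steiner_ls S).

Lemma sts_block_exists (x y : 'I_n) :
  x != y -> exists2 B, B \in S & (x \in B) && (y \in B).
Proof.
move=> xy; have /eqP/cards1P [B eB] := STS_S.2 x y xy.
by have := set11 B; rewrite -eB inE => /andP [BS xyB]; exists B.
Qed.

Lemma sts_block_unique (x y : 'I_n) (B1 B2 : {set 'I_n}) :
  x != y -> B1 \in S -> B2 \in S -> x \in B1 -> y \in B1 -> x \in B2 -> y \in B2 ->
  B1 = B2.
Proof.
move=> xy B1S B2S xB1 yB1 xB2 yB2; have /eqP/cards1P [B eB] := STS_S.2 x y xy.
have : B1 \in [set B in S | (x \in B) && (y \in B)] by rewrite inE B1S xB1.
have : B2 \in [set B in S | (x \in B) && (y \in B)] by rewrite inE B2S xB2.
by rewrite eB !inE => /eqP -> /eqP ->.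
Qed.

Lemma steiner_offdiag (t : triple n) :
  t \in L -> row_of t != col_of t ->
  [/\ [set row_of t; col_of t; sym_of t] \in S, col_of t != sym_of t
    & row_of t != sym_of t].
Proof.
rewrite inE => /orP [/andP [/eqP -> _] | BS _]; first by rewrite eqxx.
have /eqP := STS_S.1 _ BS; rewrite card_set3_uniq /= !inE negb_or.
by case/and3P => /andP [_ rs] cs _.
Qed.

Lemma steiner_cell_exists (x y : 'I_n) : x != y -> exists z, ((x, y), z) \in L.
Proof.
move=> xy; have [B BS /andP [xB yB]] := sts_block_exists xy.
have B3 := STS_S.1 _ BS.
have : 0 < #|B :\: [set x; y]|.
  rewrite cardsD B3 subn_gt0 ltnS.
  by apply: leq_trans (subset_leq_card (subsetIr _ _)) _; rewrite cards2; case: (x != y).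
case/card_gt0P => z; rewrite !inE negb_or => /andP [/andP [zx zy] zB].
exists z; rewrite inE; apply/orP; right => /=.
suff -> : [set x; y; z] = B by [].
apply/eqP; rewrite eqEcard B3; apply/andP; split.
  by apply/subsetP => u; rewrite !inE => /orP [/orP [] |] /eqP ->.
have /eqP -> // : #|[set x; y; z]| == 3.
by rewrite card_set3_uniq /= !inE negb_or xy eq_sym zx eq_sym zy.
Qed.

Definition third (x y : 'I_n) : 'I_n := odflt x [pick z | ((x, y), z) \in L].

Lemma third_cell (x y : 'I_n) : x != y -> ((x, y), third x y) \in L.
Proof.
move=> xy; rewrite /third; case: pickP => [z // | none].
by have [z xyz] := steiner_cell_exists xy; move: (none z); rewrite xyz.
Qed.

Lemma steiner_col_unique (x y y' z : 'I_n) :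
  ((x, y), z) \in L -> ((x, y'), z) \in L -> x != y -> x != y' -> y = y'.
Proof.
move=> xyz xy'z xy xy'.
have [BS yz xz] := steiner_offdiag xyz xy.
have [B'S y'z _] := steiner_offdiag xy'z xy'.
have E : [set x; y; z] = [set x; y'; z].
  by apply: (sts_block_unique xz) => //; rewrite !inE eqxx ?orbT.
have : y' \in [set x; y; z] by rewrite E !inE eqxx orbT.
rewrite !inE => /orP [/orP [] |] /eqP e //; first by rewrite e eqxx in xy'.
by rewrite e eqxx in y'z.
Qed.

Lemma third_inj (x y y' : 'I_n) :
  x != y -> x != y' -> third x y = third x y' -> y = y'.
Proof.
move=> xy xy' e; apply: (steiner_col_unique (third_cell xy)) => //.
by rewrite e third_cell.
Qed.

Lemma rotate_steiner (t : triple n) : t \in L -> rotate t \in L.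
Proof.
case: t => [[x y] z]; rewrite !inE /row_of /col_of /sym_of /= (set3C x y z).
by case/orP => [/andP [/eqP -> /eqP ->] | ->]; rewrite ?eqxx ?orbT.
Qed.

Lemma diag_cell_steiner (a : 'I_n) : diag_cell a \in L.
Proof. by rewrite inE /diag_cell /row_of /col_of /sym_of /= eqxx. Qed.

Definition fresh_cells (R : {set 'I_n}) : {set triple n} :=
  [set t in L | [&& row_of t != col_of t, row_of t \notin R, col_of t \notin R
                  & sym_of t \notin R]].

Lemma fresh_cells_row (R : {set 'I_n}) (x : 'I_n) :
  x \notin R -> 2 * #|~: R| - n.+1 <= #|[set t in fresh_cells R | row_of t == x]|.
Proof.
move=> xR.
set Y := [set y | (y \notin R) && (y != x)].
set Good := [set y in Y | third x y \notin R].
set Bad := [set y in Y | third x y \in R].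
have cardY : #|Y| = #|~: R| - 1.
  rewrite (cardsD1 x (~: R)) inE xR add1n subn1 /=.
  by apply: eq_card => y; rewrite !inE andbC.
have Y_split : #|Y| <= #|Good| + #|Bad|.
  apply: leq_trans (leq_card_setU Good Bad); apply/subset_leq_card/subsetP => y.
  by rewrite !inE => -> /=; apply: orNb.
have Bad_le : #|Bad| <= #|R|.
  rewrite -(@card_in_imset _ _ (third x)).
    by apply/subset_leq_card/subsetP => z /imsetP [y]; rewrite inE => /andP [_ ?] ->.
  move=> y y'; rewrite !inE => /andP [/andP [_ yx] _] /andP [/andP [_ y'x] _].
  by apply: third_inj; rewrite eq_sym.
have Good_le : #|Good| <= #|[set t in fresh_cells R | row_of t == x]|.
  rewrite -(@card_in_imset _ _ (fun y => ((x, y), third x y) : triple n));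
    last by move=> ? ? _ _ [].
  apply/subset_leq_card/subsetP => t /imsetP [y yG ->].
  move: yG; rewrite [y \in _]inE [y \in _]inE => /andP [/andP [yR yx] zR].
  have xy : x != y by rewrite eq_sym.
  by rewrite inE [_ \in fresh_cells _]inE third_cell // /row_of /col_of /sym_of /= xy xR yR zR eqxx.
have : #|R| + #|~: R| = n by rewrite cardsC card_ord.
lia.
Qed.

Lemma card_fresh_cells (R : {set 'I_n}) :
  #|~: R| * (2 * #|~: R| - n.+1) <= #|fresh_cells R|.
Proof.
rewrite (card_fibers (@row_of n)) (bigID (mem (~: R))) -sum_nat_const /=.
apply: leq_trans (leq_addr _ _).
by apply: leq_sum => x; rewrite inE; apply: fresh_cells_row.
Qed.

Lemma fresh_rotations_disjoint (T : {set triple n}) (t : triple n) :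
  t \in fresh_cells (rows_of T) -> [disjoint T & rotations t].
Proof.
rewrite inE => /and5P [_ _ rt ct st]; apply/pred0P => u /=.
apply/negP => /andP [uT /rotationsP ut]; have : row_of u \in rows_of T by apply: imset_f.
by case: ut => ->; rewrite /rotate /= ?(negbTE rt) ?(negbTE ct) ?(negbTE st).
Qed.

Lemma completable_add (T : {set triple n}) (t : triple n) :
  completable L T -> t \in fresh_cells (rows_of T) -> completable L (T :|: rotations t).
Proof.
move=> cT tF; have := tF; rewrite inE => /and5P [tL toff rt ct st].
have [_ cs rs] := steiner_offdiag tL toff.
have rowsT u : u \in T -> row_of u \in rows_of T by move=> uT; apply: imset_f.
have colsT u : u \in T -> col_of u \in rows_of T.
  by move=> uT; rewrite -(completable_cols cT) imset_f.
have symsT u : u \in T -> sym_of u \in rows_of T.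
  by move=> uT; rewrite -(completable_syms cT) imset_f.
have fresh u : u \in rotations t ->
    [/\ row_of u \notin rows_of T, col_of u \notin rows_of T & sym_of u \notin rows_of T].
  by move=> /rotationsP [] ->.
have rows_add : rows_of (T :|: rotations t) = rows_of T :|: [set row_of t; col_of t; sym_of t].
  by rewrite /rows_of imsetU imset_rotations.
split.
- rewrite subUset (completable_sub cT); apply/subsetP => u /rotationsP [] ->;
    by rewrite ?rotate_steiner.
- move=> u /setUP [uT | /rotationsP [] ->]; first exact: (completable_offdiag cT).
  + exact: toff.
  + exact: cs.
  + by rewrite /rotate /= eq_sym.
- apply: (injective_setU (completable_row_inj cT)) rowsT _.
  + by apply: injective_rotations; rewrite // eq_sym.
  + by move=> u /fresh [].
- apply: (injective_setU (completable_col_inj cT)) colsT _.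
  + by apply: injective_rotations; rewrite // eq_sym.
  + by move=> u /fresh [].
- apply: (injective_setU (completable_sym_inj cT)) symsT _.
  + by apply: injective_rotations; rewrite // eq_sym.
  + by move=> u /fresh [].
- by rewrite rows_add imsetU (completable_cols cT) imset_rotations set3C.
- by rewrite rows_add imsetU (completable_syms cT) imset_rotations -set3C.
Qed.

Fixpoint rotation_builds (p : nat) : {set {set triple n}} :=
  if p is p'.+1 then
    [set U | [exists T in rotation_builds p',
               exists t, (t \in fresh_cells (rows_of T)) && (U == T :|: rotations t)]]
  else [set set0].

Lemma rotation_builds_add (p : nat) (T : {set triple n}) (t : triple n) :
  T \in rotation_builds p -> t \in fresh_cells (rows_of T) ->
  T :|: rotations t \in rotation_builds p.+1.
Proof.
move=> Tp tF; rewrite inE; apply/existsP; exists T; rewrite Tp.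
by apply/existsP; exists t; rewrite tF eqxx.
Qed.

Lemma rotation_builds_completable (p : nat) (T : {set triple n}) :
  T \in rotation_builds p -> completable L T /\ #|T| <= 3 * p.
Proof.
elim: p T => [|p IH] T /=.
  rewrite inE => /eqP ->; rewrite cards0; split => //.
  by split; rewrite /rows_of ?imset0 ?sub0set // => ?; rewrite inE.
rewrite inE => /existsP [T0] /andP [T0p /existsP [t /andP [tF /eqP ->]]].
have [cT0 T0_le] := IH _ T0p; split; first exact: completable_add.
by rewrite cardsU; have := card_rotations t; lia.
Qed.

Lemma sum_card_fresh_cells (p : nat) :
  \sum_(T in rotation_builds p) #|fresh_cells (rows_of T)| <=
    3 * p.+1 * #|rotation_builds p.+1|.
Proof.
pose P := [set x : {set triple n} * triple n |
            (x.1 \in rotation_builds p) && (x.2 \in fresh_cells (rows_of x.1))].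
pose Q := [set x : {set triple n} * triple n | (x.1 \in rotation_builds p.+1) && (x.2 \in x.1)].
pose grow (x : {set triple n} * triple n) := (x.1 :|: rotations x.2, x.2).
have Q_le : #|Q| <= 3 * p.+1 * #|rotation_builds p.+1|.
  rewrite (card_dep_pairs _ (fun U => U)) mulnC -sum_nat_const.
  by apply: leq_sum => U /rotation_builds_completable [].
have grow_PQ : grow @: P \subset Q.
  apply/subsetP => x /imsetP [[T t] Tt ->]; move: Tt; rewrite inE /= => /andP [Tp tF].
  by rewrite inE /= rotation_builds_add // !inE eqxx orbT.
have grow_inj : {in P &, injective grow}.
  move=> [T t] [T' t'] /[1!inE] /= /andP [_ tF] /[1!inE] /= /andP [_ t'F] [E et]; subst t'.
  have drop (U : {set triple n}) :
    [disjoint U & rotations t] -> U = (U :|: rotations t) :\: rotations t.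
    by move=> /setDidPl dU; rewrite setDUl setDv setU0 dU.
  by rewrite (drop T (fresh_rotations_disjoint tF)) (drop T' (fresh_rotations_disjoint t'F)) E.
rewrite -card_dep_pairs -/P -(card_in_imset grow_inj).
exact: leq_trans (subset_leq_card grow_PQ) Q_le.
Qed.

Lemma card_rotation_builds_le (p : nat) : #|rotation_builds p| <= ntrans L.
Proof.
rewrite /ntrans -(@card_in_imset _ _ (@completion n) (mem (rotation_builds p))).
  apply/subset_leq_card/subsetP => _ /imsetP [T Tp ->]; rewrite inE.
  exact/completion_transversal/(rotation_builds_completable Tp).1/diag_cell_steiner.
move=> T T' /rotation_builds_completable [cT _] /rotation_builds_completable [cT' _] E.
by rewrite (completion_offdiag (completable_offdiag cT))
  (completion_offdiag (completable_offdiag cT')) E.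
Qed.

Lemma card_fresh_cells_build (p : nat) (T : {set triple n}) :
  0 < n %% 6 -> p < n %/ 6 -> T \in rotation_builds p ->
  18 * (n %/ 3 - p) * (n %/ 6 - p) <= #|fresh_cells (rows_of T)|.
Proof.
move=> n6 pm Tp; have [_ T_le] := rotation_builds_completable Tp.
have rows_le : #|rows_of T| <= 3 * p := leq_trans (leq_imset_card _ _) T_le.
have ns : #|rows_of T| + #|~: rows_of T| = n by rewrite cardsC card_ord.
apply: leq_trans (card_fresh_cells (rows_of T)); set s := #|~: _|.
have h1 : 3 * (n %/ 3 - p) <= s by lia.
have h2 : 6 * (n %/ 6 - p) <= 2 * s - n.+1 by lia.
apply: leq_trans (leq_mul h1 h2); apply: eq_leq; ring.
Qed.

Lemma card_rotation_builds_succ (p : nat) :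
  0 < n %% 6 -> p < n %/ 6 ->
  6 * (n %/ 3 - p) * (n %/ 6 - p) * #|rotation_builds p| <= p.+1 * #|rotation_builds p.+1|.
Proof.
move=> n6 pm.
have : #|rotation_builds p| * (18 * (n %/ 3 - p) * (n %/ 6 - p)) <=
       3 * p.+1 * #|rotation_builds p.+1|.
  rewrite -sum_nat_const; apply: leq_trans (sum_card_fresh_cells p).
  by apply: leq_sum => T; apply: card_fresh_cells_build.
lia.
Qed.

Lemma card_rotation_builds_ge (p : nat) :
  0 < n %% 6 -> p <= n %/ 6 ->
  6 ^ p * (n %/ 3) ^_ p * (n %/ 6) ^_ p <= p`! * #|rotation_builds p|.
Proof.
move=> n6; elim: p => [|p IH] pm; first by rewrite /= cards1.
have := leq_mul (leqnn p`!) (card_rotation_builds_succ n6 pm).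
have := leq_mul (leqnn (6 * (n %/ 3 - p) * (n %/ 6 - p))) (IH (ltnW pm)).
rewrite !ffactnSr expnS factS.
move: (n %/ 3 - p) (n %/ 6 - p) ((n %/ 3) ^_ p) ((n %/ 6) ^_ p) (6 ^ p) p`! => a b x y e f.
lia.
Qed.

Lemma steiner_ntrans_ge :
  0 < n %% 6 -> 6 ^ (n %/ 6) * (n %/ 3) ^_ (n %/ 6) <= ntrans L.
Proof.
move=> n6; apply: leq_trans (card_rotation_builds_le (n %/ 6)).
have := card_rotation_builds_ge n6 (leqnn _).
by rewrite ffactnn [X in X <= _]mulnC leq_pmul2l ?fact_gt0.
Qed.

End SteinerLatinSquare.

Theorem theorem1 (n : nat) (S : {set {set 'I_n}}) :
  3 <= n -> (n %% 6 = 1 \/ n %% 6 = 3) -> is_STS S ->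
  let k := ceildiv (n - 1) 6 in
  ((6 ^ (k - 1) * (n %/ 3)`!)%:R / (k`! * k)%:R <= (ntrans (steiner_ls S))%:R :> rat)%R.
Proof.
move=> n3 n_mod STS_S; cbv zeta; set k := ceildiv (n - 1) 6.
have n6 : 0 < n %% 6 by case: n_mod => ->.
have k_eq : k = n %/ 3 - n %/ 6 by rewrite /k /ceildiv /=; lia.
have k_gt0 : 0 < k by rewrite k_eq; lia.
have fact_q : (n %/ 3)`! = (n %/ 3) ^_ (n %/ 6) * k`!.
  by rewrite k_eq ffact_fact //; lia.
have pow_le : 6 ^ (k - 1) <= 6 ^ (n %/ 6) by rewrite leq_exp2l //; lia.
rewrite ler_pdivrMr ?ltr0n ?muln_gt0 ?fact_gt0 // -natrM ler_nat fact_q.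
apply: leq_trans (_ : ntrans (steiner_ls S) * k`! <= _); last by rewrite mulnA leq_pmulr.
rewrite mulnA leq_mul2r (leq_trans _ (steiner_ntrans_ge STS_S n6)) ?orbT //.
by rewrite leq_mul2r pow_le orbT.
Qed.
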